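(* Let $\alpha\in\mathbb{Q}(i)\setminus\mathbb{R}$ with $|\alpha|>1$, with minimal primitive polynomial $P_\alpha(X)=a_2X^2+a_1X+a_0$ ($a_0,a_1,a_2\in\mathbb{Z}$ coprime, $a_2>0$, $P_\alpha(\alpha)=0$), $\mathcal{D}=\{0,\ldots,|a_0|-1\}$ and $\Lambda_\alpha=\mathbb{Z}[\alpha]\cap\alpha^{-1}\mathbb{Z}[\alpha^{-1}]$. If $N\in\Lambda_\alpha\setminus\{0\}$ has an integer $\alpha$-expansion $N=\sum_{j=0}^k d_j\alpha^j$ ($d_j\in\mathcal{D}$, $d_k\ne0$), then $$k=\log_{|\alpha|}(|N|)+\mathcal{O}(1),$$ where the implied constant depends only on $\alpha$.
   Context: For $x\in\Lambda_\alpha$ there is a unique $d\in\mathcal{D}$ with $(x-d)/\alpha\in\Lambda_\alpha$, and $T_\alpha(x)=(x-d)/\alpha$. For $N=N_0\in\Lambda_\alpha$ let $N_{j+1}=T_\alpha(N_j)$ and $d_j$ be defined by $N_j=\alpha N_{j+1}+d_j$; if $k$ is minimal with $N_{k+1}=0$, then $N=\sum_{j=0}^k d_j\alpha^j$ is the integer $\alpha$-expansion of $N$. *)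

From Stdlib Require Import Reals ZArith.
From Coquelicot Require Import Coquelicot.
Open Scope R_scope.

Fixpoint Cpown (x : C) (n : nat) : C :=
  match n with O => RtoC 1 | S m => Cmult x (Cpown x m) end.

Fixpoint csum (f : nat -> C) (n : nat) : C :=
  match n with O => RtoC 0 | S m => Cplus (csum f m) (f m) end.

Definition is_rational (x : R) : Prop :=
  exists p q : Z, (q <> 0)%Z /\ x = IZR p / IZR q.

Definition in_Qi (a : C) : Prop := is_rational (fst a) /\ is_rational (snd a).

Definition in_Z_alpha (a x : C) : Prop :=
  exists (n : nat) (c : nat -> Z), x = csum (fun j => Cmult (RtoC (IZR (c j))) (Cpown a j)) n.

Definition in_invZ_invalpha (a x : C) : Prop :=
  exists (n : nat) (c : nat -> Z),
    x = csum (fun j => Cmult (RtoC (IZR (c j))) (Cpown (Cinv a) (S j))) n.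

Definition in_Lambda (a x : C) : Prop := in_Z_alpha a x /\ in_invZ_invalpha a x.

Definition exp_tail (a : C) (k : nat) (d : nat -> nat) (j : nat) : C :=
  csum (fun i => Cmult (RtoC (INR (d (j + i)%nat))) (Cpown a i)) (S k - j).

(* The integer alpha-expansion of N with digit set D = {0,...,|a0|-1}:
   digits d_0..d_k in D, d_k <> 0, and the sequence N_j = sum_{i=j}^k d_i alpha^(i-j)
   satisfies N_0 = N and N_j in Lambda_alpha for all j <= k+1. Since N_j = alpha N_{j+1} + d_j,
   and the digit d with (x-d)/alpha in Lambda_alpha is unique, this says exactly
   N_{j+1} = T_alpha(N_j), N_{k+1} = 0, with k minimal (as N_k = d_k <> 0). *)
Definition is_int_alpha_expansion (a : C) (a0 : Z) (N : C) (k : nat) (d : nat -> nat) : Prop :=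
  (forall j, (j <= k)%nat -> (d j < Z.abs_nat a0)%nat) /\
  d k <> 0%nat /\
  N = exp_tail a k d 0 /\
  (forall j, (j <= S k)%nat -> in_Lambda a (exp_tail a k d j)).

From Stdlib Require Import Reals ZArith Lia Lra Znumtheory List.
From Coquelicot Require Import Coquelicot.
Open Scope R_scope.

(* Every element of Lambda_alpha lies in the lattice Z + Z a2 alpha: if alpha y is an integer e
   for some y in Z[alpha], Gauss's lemma for the primitive polynomial P_alpha gives a0 | e, and
   one peels off the digits of alpha^-1 Z[alpha^-1] one at a time.  As
   alpha (Z + Z a2 alpha) is contained in a0 Z + Z alpha, each step of T_alpha has a unique digit,
   so the orbit N_0, ..., N_k of an expansion consists of distinct nonzero lattice points.
   From N_j = alpha N_(j+1) + d_j, the moduli satisfy | |N_j| - |alpha| |N_(j+1)| | <= a0.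
   Hence |N| <= c |alpha|^(k+1) with c = a0 / (|alpha| - 1); conversely |N_j| - c grows like
   |alpha|^j, so every N_j with |alpha|^j >= |N| lies in the disc of radius c + 1, which
   contains boundedly many lattice points.  This bounds k - log_|alpha| |N| on both sides. *)

Lemma csum_ext (f g : nat -> C) n : (forall j, (j < n)%nat -> f j = g j) -> csum f n = csum g n.
Proof.
  induction n as [|n IH]; intros H; simpl; auto.
  rewrite IH by (intros; apply H; lia).
  rewrite H by lia; reflexivity.
Qed.

Lemma csum_plus (f g : nat -> C) n :
  csum (fun j => Cplus (f j) (g j)) n = Cplus (csum f n) (csum g n).
Proof. induction n as [|n IH]; simpl; [ring | rewrite IH; ring]. Qed.

Lemma csum_scal c (f : nat -> C) n : csum (fun j => Cmult c (f j)) n = Cmult c (csum f n).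
Proof. induction n as [|n IH]; simpl; [ring | rewrite IH; ring]. Qed.

Lemma csum_shift (f : nat -> C) n : csum f (S n) = Cplus (f 0%nat) (csum (fun j => f (S j)) n).
Proof.
  induction n as [|n IH]; [simpl; ring|].
  change (csum f (S (S n))) with (Cplus (csum f (S n)) (f (S n))).
  rewrite IH; simpl; ring.
Qed.

Lemma csum_pad (f : nat -> C) n m :
  (forall j, (n <= j)%nat -> f j = RtoC 0) -> csum f (m + n) = csum f n.
Proof. intros H; induction m as [|m IH]; simpl; auto. rewrite IH, H by lia; ring. Qed.

Definition deg_lt (q : nat -> Z) (n : nat) : Prop := forall k, (n <= k)%nat -> q k = 0%Z.

Definition shift (q : nat -> Z) (k : nat) : Z :=
  match k with O => 0%Z | S k' => q k' end.

Definition monomial (m k : nat) : Z := if Nat.eqb k m then 1%Z else 0%Z.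

Definition poly_eval (a : C) (q : nat -> Z) (n : nat) : C :=
  csum (fun j => Cmult (RtoC (IZR (q j))) (Cpown a j)) n.

Lemma poly_eval_ext a q1 q2 n : (forall j, q1 j = q2 j) -> poly_eval a q1 n = poly_eval a q2 n.
Proof. intros H; apply csum_ext; intros j _; rewrite H; reflexivity. Qed.

Lemma poly_eval_add a q1 q2 n :
  poly_eval a (fun k => (q1 k + q2 k)%Z) n = Cplus (poly_eval a q1 n) (poly_eval a q2 n).
Proof.
  unfold poly_eval; rewrite <- csum_plus; apply csum_ext; intros j _.
  rewrite plus_IZR, RtoC_plus; ring.
Qed.

Lemma poly_eval_scal a x q n :
  poly_eval a (fun k => (x * q k)%Z) n = Cmult (RtoC (IZR x)) (poly_eval a q n).
Proof.
  unfold poly_eval; rewrite <- csum_scal; apply csum_ext; intros j _.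
  rewrite mult_IZR, RtoC_mult; ring.
Qed.

Lemma poly_eval_pad a q n m : deg_lt q n -> poly_eval a q (m + n) = poly_eval a q n.
Proof.
  intros H; unfold poly_eval; apply csum_pad; intros j Hj.
  rewrite H by exact Hj; simpl; ring.
Qed.

Lemma poly_eval_shift a q n : poly_eval a (shift q) (S n) = Cmult a (poly_eval a q n).
Proof.
  unfold poly_eval; rewrite csum_shift, <- csum_scal; simpl shift.
  rewrite Cmult_0_l, Cplus_0_l; apply csum_ext; intros j _; simpl; ring.
Qed.

Lemma poly_eval_monomial0 a n : poly_eval a (monomial 0) (S n) = 1.
Proof.
  replace (S n) with (n + 1)%nat by lia.
  rewrite poly_eval_pad; [unfold poly_eval, monomial; simpl; ring|].
  intros k Hk; unfold monomial; destruct (Nat.eqb_spec k 0); lia.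
Qed.

Lemma poly_truncate a q n : exists q', deg_lt q' n /\ poly_eval a q' n = poly_eval a q n.
Proof.
  exists (fun k => if Nat.ltb k n then q k else 0%Z); split.
  - intros k Hk; destruct (Nat.ltb_spec k n); lia.
  - apply csum_ext; intros j Hj; destruct (Nat.ltb_spec j n); [reflexivity | lia].
Qed.

Lemma Zalpha_mul a x : in_Z_alpha a x -> in_Z_alpha a (Cmult a x).
Proof. intros (n & c & ->); exists (S n), (shift c); symmetry; apply poly_eval_shift. Qed.

Lemma Zalpha_add_int a x z : in_Z_alpha a x -> in_Z_alpha a (Cplus x (IZR z)).
Proof.
  intros (n & c & E); destruct (poly_truncate a c n) as (c' & Hc' & Ec').
  exists (1 + n)%nat, (fun k => (c' k + z * monomial 0 k)%Z).
  change (Cplus x (IZR z) = poly_eval a (fun k => (c' k + z * monomial 0 k)%Z) (1 + n)).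
  rewrite poly_eval_add, poly_eval_scal, poly_eval_pad, poly_eval_monomial0, Ec', E by exact Hc'.
  unfold poly_eval; ring.
Qed.

(** * Gauss's lemma for a primitive quadratic *)

Section QuadraticFactor.

Variables a0 a1 a2 : Z.

Definition quad_mul (q : nat -> Z) (k : nat) : Z :=
  (a0 * q k + a1 * shift q k + a2 * shift (shift q) k)%Z.

Lemma quad_mul_ext q1 q2 k : (forall i, q1 i = q2 i) -> quad_mul q1 k = quad_mul q2 k.
Proof. intros H; unfold quad_mul, shift; destruct k as [|[|k]]; rewrite ?H; ring. Qed.

Lemma quad_mul_add q1 q2 k :
  quad_mul (fun i => (q1 i + q2 i)%Z) k = (quad_mul q1 k + quad_mul q2 k)%Z.
Proof. unfold quad_mul, shift; destruct k as [|[|k]]; ring. Qed.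

Lemma quad_mul_scal c q k : quad_mul (fun i => (c * q i)%Z) k = (c * quad_mul q k)%Z.
Proof. unfold quad_mul, shift; destruct k as [|[|k]]; ring. Qed.

Lemma quad_mul_deg_lt q s : deg_lt q s -> deg_lt (quad_mul q) (S (S s)).
Proof.
  intros H k Hk; unfold quad_mul, shift.
  destruct k as [|[|k]]; try lia; rewrite !H by lia; ring.
Qed.

Lemma quad_mul_monomial_lead s : quad_mul (monomial s) (S (S s)) = a2.
Proof.
  unfold quad_mul, shift, monomial; rewrite Nat.eqb_refl.
  destruct (Nat.eqb_spec (S (S s)) s), (Nat.eqb_spec (S s) s); lia.
Qed.

Lemma prime_divides_quad_mul p q :
  prime p -> ~ ((p | a0) /\ (p | a1) /\ (p | a2))%Z ->
  (forall k, (p | quad_mul q k)%Z) -> forall j, (p | q j)%Z.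
Proof.
  intros Hp Hnot Hdiv j; induction j as [j IH] using lt_wf_ind.
  (* With i the least index such that p does not divide a_i, the coefficient of
     X^(j+i) is a_i q_j plus multiples of p. *)
  assert (Hsh : (p | shift q j)%Z).
  { destruct j; [apply Z.divide_0_r | apply IH; lia]. }
  assert (Hsh2 : (p | shift (shift q) j)%Z).
  { destruct j as [|[|j]]; [apply Z.divide_0_r .. | apply IH; lia]. }
  assert (cancel : forall x y, (p | x)%Z -> (p | x + y)%Z -> (p | y)%Z).
  { intros x y Hx Hxy; replace y with (x + y - x)%Z by ring; apply Z.divide_sub_r; assumption. }
  destruct (Zdivide_dec p a0) as [D0|D0].
  - destruct (Zdivide_dec p a1) as [D1|D1].
    + destruct (Zdivide_dec p a2) as [D2|D2]; [tauto|].
      specialize (Hdiv (S (S j))); unfold quad_mul in Hdiv; simpl in Hdiv.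
      apply cancel in Hdiv; [|apply Z.divide_add_r; apply Z.divide_mul_l; assumption].
      destruct (prime_mult _ Hp _ _ Hdiv); tauto.
    + specialize (Hdiv (S j)); unfold quad_mul in Hdiv; simpl in Hdiv.
      replace (a0 * q (S j) + a1 * q j + a2 * shift q j)%Z
        with (a0 * q (S j) + a2 * shift q j + a1 * q j)%Z in Hdiv by ring.
      apply cancel in Hdiv;
        [|apply Z.divide_add_r; [apply Z.divide_mul_l | apply Z.divide_mul_r]; assumption].
      destruct (prime_mult _ Hp _ _ Hdiv); tauto.
  - specialize (Hdiv j); unfold quad_mul in Hdiv.
    replace (a0 * q j + a1 * shift q j + a2 * shift (shift q) j)%Z
      with (a1 * shift q j + a2 * shift (shift q) j + a0 * q j)%Z in Hdiv by ring.
    apply cancel in Hdiv; [|apply Z.divide_add_r; apply Z.divide_mul_r; assumption].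
    destruct (prime_mult _ Hp _ _ Hdiv); tauto.
Qed.

Lemma monomial_deg_lt m : deg_lt (monomial m) (S m).
Proof. intros k Hk; unfold monomial; destruct (Nat.eqb_spec k m); lia. Qed.

Lemma quad_pseudo_division n g : (0 < a2)%Z -> deg_lt g n ->
  exists M q r, (0 < M)%Z /\ deg_lt q n /\ deg_lt r 2 /\
    forall k, (M * g k = quad_mul q k + r k)%Z.
Proof.
  intros Ha2; revert g; induction n as [n IH] using lt_wf_ind; intros g Hg.
  destruct (le_lt_dec n 2) as [Hn|Hn].
  { exists 1%Z, (fun _ => 0%Z), g; repeat split; try lia; try (intros k Hk; apply Hg; lia).
    intros k; unfold quad_mul, shift; destruct k as [|[|k]]; ring. }
  destruct n as [|[|[|m]]]; [lia .. |].
  (* Cancel the leading coefficient c of g against c X^m P. *)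
  set (c := g (S (S m))).
  set (g' := fun k => (a2 * g k - c * quad_mul (monomial m) k)%Z).
  destruct (IH (S (S m)) ltac:(lia) g') as (M & q & r & HM & Hq & Hr & E).
  { intros k Hk; unfold g'.
    destruct (Nat.eq_dec k (S (S m))) as [->|Hk'].
    - rewrite quad_mul_monomial_lead; unfold c; ring.
    - rewrite Hg, (quad_mul_deg_lt _ _ (monomial_deg_lt m)) by lia; ring. }
  exists (a2 * M)%Z, (fun i => (q i + M * c * monomial m i)%Z), r.
  repeat split; [nia | | exact Hr |].
  - intros k Hk; rewrite Hq, (monomial_deg_lt m) by lia; ring.
  - intros k; specialize (E k); unfold g' in E.
    rewrite quad_mul_add, quad_mul_scal; nia.
Qed.

Hypothesis primitive : Z.gcd (Z.gcd a0 a1) a2 = 1%Z.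

Lemma no_common_prime_divisor p : prime p -> ~ ((p | a0) /\ (p | a1) /\ (p | a2))%Z.
Proof.
  intros [Hp _] (D0 & D1 & D2).
  assert (D : (p | 1)%Z) by (rewrite <- primitive; auto using Z.gcd_greatest).
  apply Z.divide_pos_le in D; lia.
Qed.

Lemma content_quad_mul M q :
  (0 < M)%Z -> (forall k, (M | quad_mul q k)%Z) -> forall k, (M | q k)%Z.
Proof.
  intros HM; assert (HM0 : (0 <= M)%Z) by lia; revert q HM.
  pattern M; apply Zlt_0_ind; [clear M HM0 | exact HM0].
  intros M IH _ q HM Hdiv k.
  destruct (Z.eq_dec M 1) as [->|HM1]; [apply Z.divide_1_l|].
  destruct (prime_dec M) as [Hp|Hp].
  { exact (prime_divides_quad_mul M q Hp (no_common_prime_divisor M Hp) Hdiv k). }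
  destruct (not_prime_divide M ltac:(lia) Hp) as (p & Hpb & e & He).
  assert (Hq : forall i, (p | q i)%Z).
  { apply IH; [lia | lia |]; intros i.
    apply (Z.divide_trans _ M); [exists e; lia | apply Hdiv]. }
  set (q' := fun i => (q i / p)%Z).
  assert (Eq : forall i, q i = (p * q' i)%Z).
  { intros i; unfold q'; destruct (Hq i) as [t ->]; rewrite Z.div_mul by lia; ring. }
  assert (He' : (e | q' k)%Z).
  { apply IH; [nia | nia |]; intros i.
    apply (Z.mul_divide_cancel_l _ _ p); [lia|].
    rewrite <- quad_mul_scal, (quad_mul_ext _ q) by (intros; symmetry; apply Eq).
    replace (p * e)%Z with M by lia; apply Hdiv. }
  rewrite Eq, He, Z.mul_comm; apply Z.mul_divide_mono_l; exact He'.
Qed.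

End QuadraticFactor.

Definition Pquad (a0 a1 a2 : Z) (x : C) : C := (IZR a2 * (x * x) + IZR a1 * x + IZR a0)%C.

Lemma poly_eval_quad_mul a0 a1 a2 x q s : deg_lt q s ->
  poly_eval x (quad_mul a0 a1 a2 q) (S (S s)) = Cmult (Pquad a0 a1 a2 x) (poly_eval x q s).
Proof.
  intros Hq; unfold quad_mul.
  rewrite !poly_eval_add, !poly_eval_scal, !poly_eval_shift.
  replace (S (S s)) with (2 + s)%nat by lia; rewrite poly_eval_pad by exact Hq.
  replace (S s) with (1 + s)%nat by lia; rewrite poly_eval_pad by exact Hq.
  unfold Pquad; ring.
Qed.

Lemma int_comb_nonreal_eq0 (x : C) (u v : Z) :
  snd x <> 0 -> (IZR u + IZR v * x)%C = RtoC 0 -> u = 0%Z /\ v = 0%Z.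
Proof.
  intros Hx E.
  assert (Ev : IZR v * snd x = 0) by (apply (f_equal snd) in E; simpl in E; lra).
  assert (Hv : IZR v = 0) by (apply Rmult_integral in Ev; tauto).
  apply (f_equal fst) in E; simpl in E; rewrite Hv in E.
  split; apply eq_IZR; lra.
Qed.

(** * Discreteness of the lattice Z + Z beta *)

Definition lattice (beta x : C) : Prop := exists u v : Z, x = (IZR u + IZR v * beta)%C.

Lemma lattice_sub beta x y : lattice beta x -> lattice beta y -> lattice beta (x - y)%C.
Proof.
  intros (u & v & ->) (u' & v' & ->); exists (u - u')%Z, (v - v')%Z.
  rewrite !minus_IZR, !RtoC_minus; ring.
Qed.

Lemma exists_nat_ge (r : R) : exists n : nat, r <= INR n.
Proof. destruct (INR_archimed 1 r) as [n Hn]; [lra | exists n; lra]. Qed.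

Lemma Cmod_ge_fst_snd (x : C) : Rabs (fst x) <= Cmod x /\ Rabs (snd x) <= Cmod x.
Proof.
  pose proof (Rmax_Cmod x); split; eapply Rle_trans; eauto; [apply Rmax_l | apply Rmax_r].
Qed.

Lemma lattice_point_parts beta (u v : Z) :
  fst (IZR u + IZR v * beta)%C = IZR u + IZR v * fst beta /\
  snd (IZR u + IZR v * beta)%C = IZR v * snd beta.
Proof. simpl; split; ring. Qed.

Lemma lattice_Cmod_ge beta x : snd beta <> 0 -> lattice beta x -> x <> RtoC 0 ->
  Rmin 1 (Rabs (snd beta)) <= Cmod x.
Proof.
  intros Hb (u & v & ->) Hx.
  destruct (Cmod_ge_fst_snd (IZR u + IZR v * beta)%C) as [Hf Hs].
  destruct (lattice_point_parts beta u v) as [-> ->] in Hf, Hs.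
  destruct (Z.eq_dec v 0) as [->|Hv].
  - assert (Hu : u <> 0%Z) by (intros ->; apply Hx; simpl; ring).
    assert (1 <= Rabs (IZR u)) by (rewrite <- abs_IZR; apply IZR_le; lia).
    rewrite Rmult_0_l, Rplus_0_r in Hf; pose proof (Rmin_l 1 (Rabs (snd beta))); lra.
  - assert (1 <= Rabs (IZR v)) by (rewrite <- abs_IZR; apply IZR_le; lia).
    rewrite Rabs_mult in Hs; pose proof (Rmin_r 1 (Rabs (snd beta))).
    pose proof (Rabs_pos (snd beta)); nra.
Qed.

Definition zrange (U : nat) : list Z :=
  map (fun i => (Z.of_nat i - Z.of_nat U)%Z) (seq 0 (S (2 * U))).

Lemma in_zrange U u : (Z.abs u <= Z.of_nat U)%Z -> In u (zrange U).
Proof.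
  intros H; apply in_map_iff; exists (Z.to_nat (u + Z.of_nat U)).
  split; [lia | apply in_seq; lia].
Qed.

Lemma Zabs_le_INR (u : Z) (n : nat) : Rabs (IZR u) <= INR n -> (Z.abs u <= Z.of_nat n)%Z.
Proof. intros H; apply le_IZR; rewrite abs_IZR, <- INR_IZR_INZ; exact H. Qed.

Lemma lattice_ball_card beta (R : R) : snd beta <> 0 -> exists K : nat, forall l : list C,
  NoDup l -> (forall x, In x l -> lattice beta x /\ Cmod x <= R) -> (length l <= K)%nat.
Proof.
  intros Hb; assert (Hsb : 0 < Rabs (snd beta)) by (apply Rabs_pos_lt; exact Hb).
  destruct (exists_nat_ge (R / Rabs (snd beta))) as [V HV].
  destruct (exists_nat_ge (R + INR V * Rabs (fst beta))) as [U HU].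
  set (box := map (fun uv => (IZR (fst uv) + IZR (snd uv) * beta)%C)
                  (list_prod (zrange U) (zrange V))).
  exists (length box); intros l Hl Hin.
  apply NoDup_incl_length; [exact Hl|]; intros x Hx.
  destruct (Hin x Hx) as [(u & v & ->) HR].
  destruct (Cmod_ge_fst_snd (IZR u + IZR v * beta)%C) as [Hf Hs].
  destruct (lattice_point_parts beta u v) as [-> ->] in Hf, Hs.
  rewrite Rabs_mult in Hs.
  assert (Hv : Rabs (IZR v) <= INR V).
  { apply (Rle_trans _ (R / Rabs (snd beta))); [|exact HV].
    apply (Rmult_le_reg_r (Rabs (snd beta))); [exact Hsb|]; field_simplify; lra. }
  assert (Hu : Rabs (IZR u) <= INR U).
  { pose proof (Rabs_triang (IZR u + IZR v * fst beta) (- (IZR v * fst beta))) as T.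
    replace (IZR u + IZR v * fst beta + - (IZR v * fst beta)) with (IZR u) in T by ring.
    rewrite Rabs_Ropp, Rabs_mult in T.
    assert (Rabs (IZR v) * Rabs (fst beta) <= INR V * Rabs (fst beta))
      by (apply Rmult_le_compat_r; [apply Rabs_pos | exact Hv]).
    lra. }
  apply in_map_iff; exists (u, v); split; [reflexivity|].
  apply in_prod; apply in_zrange, Zabs_le_INR; assumption.
Qed.

Section FunctionalOrbit.

Variables (T : Type) (step : T -> T -> Prop) (z : T) (x : nat -> T) (k : nat).
Hypothesis step_functional : forall a b b', step a b -> step a b' -> b = b'.
Hypothesis step_fixed : step z z.
Hypothesis orbit_step : forall j, (j <= k)%nat -> step (x j) (x (S j)).
Hypothesis orbit_end : x (S k) = z.
Hypothesis orbit_last : x k <> z.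

Lemma orbit_neq_fixed j : (j <= k)%nat -> x j <> z.
Proof.
  intros Hj Ez; apply orbit_last.
  assert (Hz : forall t, (j + t <= k)%nat -> x (j + t)%nat = z).
  { induction t as [|t IH]; intros Ht; [rewrite Nat.add_0_r; exact Ez|].
    rewrite Nat.add_succ_r; apply (step_functional (x (j + t)%nat)); [apply orbit_step; lia|].
    rewrite IH by lia; exact step_fixed. }
  replace k with (j + (k - j))%nat by lia; apply Hz; lia.
Qed.

Lemma orbit_injective i j : (i <= k)%nat -> (j <= k)%nat -> x i = x j -> i = j.
Proof.
  (* Equal points have equal successors; running both copies to the end reaches z too early. *)
  enough (H : forall i j, (i < j <= k)%nat -> x i <> x j).
  { intros Hi Hj E; destruct (Nat.lt_trichotomy i j) as [L|[L|L]]; auto;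
      [exfalso; apply (H i j) | exfalso; apply (H j i)]; auto; lia. }
  clear i j; intros i j Hij E.
  assert (Hshift : forall t, (j + t <= S k)%nat -> x (i + t)%nat = x (j + t)%nat).
  { induction t as [|t IH]; intros Ht; [rewrite !Nat.add_0_r; exact E|].
    rewrite !Nat.add_succ_r; apply (step_functional (x (i + t)%nat)); [apply orbit_step; lia|].
    rewrite IH by lia; apply orbit_step; lia. }
  apply (orbit_neq_fixed (i + (S k - j))); [lia|].
  rewrite Hshift by lia; replace (j + (S k - j))%nat with (S k) by lia; exact orbit_end.
Qed.

End FunctionalOrbit.

Lemma geometric_growth (r : nat -> R) (rho b : R) n : 1 < rho ->
  (forall j, (j < n)%nat -> r j <= rho * r (S j) + b) ->
  forall t, (t <= n)%nat -> r 0%nat + b / (rho - 1) <= rho ^ t * (r t + b / (rho - 1)).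
Proof.
  intros Hrho Hr; set (c := b / (rho - 1)).
  assert (Hc : b + c = rho * c) by (unfold c; field; lra).
  induction t as [|t IH]; intros Ht; [simpl; lra|].
  apply (Rle_trans _ _ _ (IH ltac:(lia))); simpl.
  assert (0 < rho ^ t) by (apply pow_lt; lra).
  specialize (Hr t ltac:(lia)); nra.
Qed.

Lemma geometric_decay (r : nat -> R) (rho b : R) n : 1 < rho ->
  (forall j, (j < n)%nat -> rho * r (S j) - b <= r j) ->
  forall t, (t <= n)%nat -> rho ^ t * (r t - b / (rho - 1)) <= r 0%nat - b / (rho - 1).
Proof.
  intros Hrho Hr t Ht.
  pose proof (geometric_growth (fun j => - r j) rho b n Hrho) as G.
  assert (G' := G ltac:(intros j Hj; specialize (Hr j Hj); lra) t Ht); lra.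
Qed.

Lemma Cmod_affine_bounds (a y e : C) :
  Cmod a * Cmod y - Cmod e <= Cmod (a * y + e)%C <= Cmod a * Cmod y + Cmod e.
Proof.
  rewrite <- Cmod_mult; split.
  - pose proof (Cmod_triangle (a * y + e)%C (- e)%C) as T.
    replace (a * y + e + - e)%C with (a * y)%C in T by ring.
    rewrite Cmod_opp in T; lra.
  - apply Cmod_triangle.
Qed.

Lemma exp_tail_step a k d j : (j <= k)%nat ->
  exp_tail a k d j = (a * exp_tail a k d (S j) + INR (d j))%C.
Proof.
  intros Hj; unfold exp_tail.
  replace (S k - j)%nat with (S (k - j)) by lia; replace (S k - S j)%nat with (k - j)%nat by lia.
  rewrite csum_shift, <- csum_scal, Nat.add_0_r, Cplus_comm; f_equal.
  - apply csum_ext; intros i _; rewrite Nat.add_succ_r; simpl; ring.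
  - simpl; ring.
Qed.

Lemma exp_tail_end a k d : exp_tail a k d (S k) = RtoC 0.
Proof. unfold exp_tail; rewrite Nat.sub_diag; reflexivity. Qed.

Lemma exp_tail_last a k d : exp_tail a k d k = RtoC (INR (d k)).
Proof. rewrite exp_tail_step, exp_tail_end by lia; ring. Qed.

(** * The lattice containing Lambda_alpha *)

Section QuadraticIrrational.

Variables (alpha : C) (a0 a1 a2 : Z).
Hypothesis alpha_nonreal : snd alpha <> 0.
Hypothesis P_primitive : Z.gcd (Z.gcd a0 a1) a2 = 1%Z.
Hypothesis a2_pos : (0 < a2)%Z.
Hypothesis P_root : Pquad a0 a1 a2 alpha = RtoC 0.

Lemma quad_divides_vanishing_poly g n : deg_lt g n -> poly_eval alpha g n = RtoC 0 ->
  exists q, forall k, g k = quad_mul a0 a1 a2 q k.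
Proof.
  intros Hg Hroot.
  destruct (quad_pseudo_division a0 a1 a2 n g a2_pos Hg) as (M & q & r & HM & Hq & Hr & E).
  assert (Hr0 : r 0%nat = 0%Z /\ r 1%nat = 0%Z).
  { apply (int_comb_nonreal_eq0 alpha); [exact alpha_nonreal|].
    assert (Eeval : Cmult (IZR M) (poly_eval alpha g (2 + n))
                    = Cplus (poly_eval alpha (quad_mul a0 a1 a2 q) (S (S n)))
                            (poly_eval alpha r (2 + n))).
    { rewrite <- poly_eval_scal, <- poly_eval_add; apply poly_eval_ext; exact E. }
    rewrite (poly_eval_pad alpha g n 2 Hg), Hroot, (poly_eval_quad_mul _ _ _ _ _ _ Hq), P_root,
      (Nat.add_comm 2 n), (poly_eval_pad alpha r 2 n Hr) in Eeval.
    unfold poly_eval in Eeval; simpl in Eeval.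
    transitivity (Cmult (IZR M) (RtoC 0)); [|ring].
    rewrite Eeval; ring. }
  assert (Er : forall k, (M * g k = quad_mul a0 a1 a2 q k)%Z).
  { intros [|[|k]]; rewrite E; [rewrite (proj1 Hr0) | rewrite (proj2 Hr0) | rewrite Hr by lia];
      ring. }
  assert (HMq : forall k, (M | q k)%Z).
  { apply (content_quad_mul a0 a1 a2 P_primitive M q HM); intros k.
    exists (g k); rewrite Z.mul_comm; symmetry; apply Er. }
  exists (fun i => (q i / M)%Z); intros k.
  apply (Z.mul_cancel_l _ _ M); [lia|].
  rewrite <- quad_mul_scal, Er; apply quad_mul_ext; intros i.
  destruct (HMq i) as [t ->]; rewrite Z.div_mul by lia; ring.
Qed.

Let beta := (IZR a2 * alpha)%C.

Lemma alpha_neq0 : alpha <> RtoC 0.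
Proof. intros E; apply alpha_nonreal; rewrite E; reflexivity. Qed.

Lemma alpha_mul_cancel x y : Cmult alpha x = Cmult alpha y -> x = y.
Proof.
  intros E; rewrite <- (Cmult_1_l x), <- (Cmult_1_l y), <- (Cinv_l alpha alpha_neq0),
    <- !Cmult_assoc, E; reflexivity.
Qed.

Lemma Zalpha_alpha_mul_int_dvd y e :
  in_Z_alpha alpha y -> Cmult alpha y = IZR e -> (a0 | e)%Z.
Proof.
  intros (n & c & Ey) He; destruct (poly_truncate alpha c n) as (c' & Hc' & Ec').
  (* e is the constant term of the integer polynomial X c'(X) - e, which has the root alpha. *)
  set (g := fun k => ((- e) * monomial 0 k + shift c' k)%Z).
  destruct (quad_divides_vanishing_poly g (S n)) as [q Hq].
  - intros [|k] Hk; [lia|]; unfold g, monomial, shift; simpl; rewrite Hc' by lia; ring.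
  - unfold g; rewrite poly_eval_add, poly_eval_scal, poly_eval_monomial0, poly_eval_shift, Ec'.
    change (poly_eval alpha c n) with (csum (fun j => Cmult (IZR (c j)) (Cpown alpha j)) n).
    rewrite <- Ey, He, opp_IZR, RtoC_opp; ring.
  - specialize (Hq 0%nat); unfold g, quad_mul, monomial, shift in Hq; simpl in Hq.
    exists (- q 0%nat)%Z; lia.
Qed.

Lemma Zalpha_alpha_mul_int_lattice y e :
  in_Z_alpha alpha y -> Cmult alpha y = IZR e -> lattice beta y.
Proof.
  intros Hy He; destruct (Zalpha_alpha_mul_int_dvd y e Hy He) as [t ->].
  exists (- t * a1)%Z, (- t)%Z; apply alpha_mul_cancel.
  rewrite He, !mult_IZR, !opp_IZR, !RtoC_mult, !RtoC_opp.
  transitivity (Cmult (IZR t) (Cminus (IZR a0) (Pquad a0 a1 a2 alpha)));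
    [rewrite P_root | unfold beta, Pquad]; ring.
Qed.

Lemma Lambda_in_lattice x : in_Lambda alpha x -> lattice beta x.
Proof.
  intros [Hx (m & e & Ex)]; revert x e Hx Ex.
  induction m as [|m IH]; intros x e Hx Ex.
  { exists 0%Z, 0%Z; rewrite Ex; simpl; ring. }
  (* alpha x = e_0 + x' with x' again in Lambda_alpha, one term shorter. *)
  set (x' := csum (fun j => Cmult (IZR (e (S j))) (Cpown (Cinv alpha) (S j))) m).
  assert (Hax : Cmult alpha x = Cplus (IZR (e 0%nat)) x').
  { rewrite Ex, csum_shift, Cmult_plus_distr_l; unfold x'; rewrite <- csum_scal; f_equal.
    - simpl; field; exact alpha_neq0.
    - apply csum_ext; intros j _; simpl; field; exact alpha_neq0. }
  assert (Hx' : in_Z_alpha alpha x').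
  { replace x' with (Cplus (Cmult alpha x) (IZR (- e 0%nat))).
    - apply Zalpha_add_int, Zalpha_mul, Hx.
    - rewrite Hax, opp_IZR, RtoC_opp; ring. }
  destruct (IH x' (fun j => e (S j)) Hx' eq_refl) as (u & v & Euv).
  assert (Hy : lattice beta (Cplus x (IZR (- (v * a2))))).
  { apply (Zalpha_alpha_mul_int_lattice _ (e 0%nat + u)%Z); [now apply Zalpha_add_int|].
    rewrite Cmult_plus_distr_l, Hax, Euv, plus_IZR, opp_IZR, mult_IZR, RtoC_plus, RtoC_opp,
      RtoC_mult; unfold beta; ring. }
  replace x with (Cminus (Cplus x (IZR (- (v * a2)))) (IZR (- (v * a2)))) by ring.
  apply lattice_sub; [exact Hy|].
  exists (- (v * a2))%Z, 0%Z; ring.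
Qed.

Lemma alpha_mul_lattice y :
  lattice beta y -> exists v w : Z, Cmult alpha y = (IZR (v * a0) + IZR w * alpha)%C.
Proof.
  intros (u & v & ->); exists (- v)%Z, (u - v * a1)%Z.
  rewrite !mult_IZR, opp_IZR, minus_IZR, mult_IZR, RtoC_minus, !RtoC_mult, RtoC_opp.
  transitivity (Cplus (Cmult (IZR v) (Cminus (Pquad a0 a1 a2 alpha) (IZR a0)))
                      (Cmult (IZR u - IZR v * IZR a1)%C alpha));
    [unfold beta, Pquad | rewrite P_root]; ring.
Qed.

Lemma digit_unique y y' (dd dd' : Z) :
  lattice beta y -> lattice beta y' -> (0 <= dd < a0)%Z -> (0 <= dd' < a0)%Z ->
  (alpha * y + IZR dd)%C = (alpha * y' + IZR dd')%C -> dd = dd' /\ y = y'.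
Proof.
  intros Hy Hy' Hd Hd' E.
  destruct (alpha_mul_lattice _ (lattice_sub _ _ _ Hy Hy')) as (v & w & Evw).
  (* alpha (y - y') = dd' - dd is a multiple of a0 plus w alpha, so w = 0 and a0 | dd' - dd. *)
  assert (Hvw : (v * a0 + dd - dd')%Z = 0%Z /\ w = 0%Z).
  { apply (int_comb_nonreal_eq0 alpha); [exact alpha_nonreal|].
    rewrite minus_IZR, plus_IZR, RtoC_minus, RtoC_plus.
    transitivity (Cplus (IZR (v * a0) + IZR w * alpha)%C (IZR dd - IZR dd')%C); [ring|].
    rewrite <- Evw.
    transitivity (Cminus (Cplus (Cmult alpha y) (IZR dd)) (Cplus (Cmult alpha y') (IZR dd')));
      [ring | rewrite E; ring]. }
  destruct Hvw as [Hv _].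
  assert (Edd : dd = dd').
  { destruct (Z.lt_trichotomy v 0) as [Hneg|[->|Hpos]]; nia. }
  split; [exact Edd|].
  apply alpha_mul_cancel; subst dd'.
  transitivity (Cminus (Cplus (Cmult alpha y) (IZR dd)) (IZR dd)); [ring|].
  rewrite E; ring.
Qed.

Lemma beta_nonreal : snd beta <> 0.
Proof.
  unfold beta; simpl; rewrite Rmult_0_l, Rplus_0_r.
  apply Rmult_integral_contrapositive; split; [apply not_0_IZR; lia | exact alpha_nonreal].
Qed.

(** * Length of an integer alpha-expansion *)

Hypothesis alpha_large : 1 < Cmod alpha.

Lemma a0_eq_a2_Cmod2 : IZR a0 = IZR a2 * Cmod alpha ^ 2.
Proof.
  pose proof (f_equal fst P_root) as Re; pose proof (f_equal snd P_root) as Im.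
  unfold Pquad in Re, Im; simpl in Re, Im.
  assert (A1 : IZR a1 = -2 * IZR a2 * fst alpha).
  { apply (Rmult_eq_reg_r (snd alpha)); [nra | exact alpha_nonreal]. }
  unfold Cmod; rewrite pow2_sqrt by nra; nra.
Qed.

Lemma a0_gt1 : 1 < IZR a0.
Proof.
  rewrite a0_eq_a2_Cmod2; assert (1 <= IZR a2) by (apply IZR_le; lia).
  assert (1 < Cmod alpha ^ 2) by nra; nra.
Qed.

Lemma a0_pos : (0 < a0)%Z.
Proof. apply lt_IZR; pose proof a0_gt1; lra. Qed.

Definition digit_step (x y : C) : Prop :=
  lattice beta y /\ exists dd : Z, (0 <= dd < a0)%Z /\ x = (alpha * y + IZR dd)%C.

Lemma digit_step_functional x y y' : digit_step x y -> digit_step x y' -> y = y'.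
Proof.
  intros [Hy (dd & Hdd & ->)] [Hy' (dd' & Hdd' & E)].
  exact (proj2 (digit_unique y y' dd dd' Hy Hy' Hdd Hdd' E)).
Qed.

Lemma digit_step_zero : digit_step (RtoC 0) (RtoC 0).
Proof.
  pose proof a0_pos; split; [exists 0%Z, 0%Z; simpl; ring | exists 0%Z; split; [lia | simpl; ring]].
Qed.

Let c := IZR a0 / (Cmod alpha - 1).
Let delta := Rmin 1 (Rabs (snd beta)).

Lemma c_pos : 0 < c.
Proof. apply Rdiv_lt_0_compat; pose proof a0_gt1; lra. Qed.

Section Expansion.

Variables (N : C) (k : nat) (d : nat -> nat).
Hypothesis expansion : is_int_alpha_expansion alpha a0 N k d.

Let Nt := exp_tail alpha k d.

Lemma expansion_step j : (j <= k)%nat -> digit_step (Nt j) (Nt (S j)).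
Proof.
  destruct expansion as (Hd & _ & _ & HL); intros Hj; split.
  - apply Lambda_in_lattice, HL; lia.
  - exists (Z.of_nat (d j)); split; [specialize (Hd j Hj); pose proof a0_pos; lia|].
    rewrite <- INR_IZR_INZ; apply exp_tail_step; exact Hj.
Qed.

Lemma expansion_last_neq0 : Nt k <> RtoC 0.
Proof.
  destruct expansion as (_ & Hdk & _); unfold Nt; rewrite exp_tail_last.
  intros E; apply RtoC_inj in E; apply Hdk, INR_eq; exact E.
Qed.

Lemma expansion_injective i j : (i <= k)%nat -> (j <= k)%nat -> Nt i = Nt j -> i = j.
Proof.
  apply (orbit_injective _ digit_step (RtoC 0) Nt k digit_step_functional digit_step_zero
    expansion_step (exp_tail_end alpha k d) expansion_last_neq0).
Qed.

Lemma expansion_neq0 : N <> RtoC 0.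
Proof.
  destruct expansion as (_ & _ & EN & _); rewrite EN.
  apply (orbit_neq_fixed _ digit_step (RtoC 0) Nt k digit_step_functional digit_step_zero
    expansion_step expansion_last_neq0); lia.
Qed.

Lemma expansion_Cmod_step j : (j <= k)%nat ->
  Cmod alpha * Cmod (Nt (S j)) - IZR a0 <= Cmod (Nt j) <= Cmod alpha * Cmod (Nt (S j)) + IZR a0.
Proof.
  intros Hj; destruct (expansion_step j Hj) as [_ (dd & Hdd & ->)].
  assert (Cmod (IZR dd) <= IZR a0)
    by (rewrite Cmod_R, Rabs_pos_eq; apply IZR_le; lia).
  pose proof (Cmod_affine_bounds alpha (Nt (S j)) (IZR dd)); lra.
Qed.

Lemma expansion_Cmod_upper : Cmod N <= c * Cmod alpha ^ S k.
Proof.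
  pose proof (geometric_growth (fun j => Cmod (Nt j)) (Cmod alpha) (IZR a0) (S k) alpha_large)
    as G.
  specialize (G ltac:(intros j Hj; apply expansion_Cmod_step; lia) (S k) (le_n _)).
  destruct expansion as (_ & _ & EN & _); unfold Nt in G; rewrite <- EN, exp_tail_end, Cmod_0 in G.
  fold c in G; pose proof c_pos; nra.
Qed.

Lemma expansion_Cmod_small j : (j <= k)%nat -> Cmod N <= Cmod alpha ^ j -> Cmod (Nt j) <= c + 1.
Proof.
  intros Hj HN.
  pose proof (geometric_decay (fun j => Cmod (Nt j)) (Cmod alpha) (IZR a0) (S k) alpha_large)
    as G.
  specialize (G ltac:(intros i Hi; apply expansion_Cmod_step; lia) j ltac:(lia)).
  destruct expansion as (_ & _ & EN & _); unfold Nt in *; rewrite <- EN in G; fold c in G.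
  pose proof c_pos as Hc.
  assert (Hpow : 0 < Cmod alpha ^ j) by (apply pow_lt; lra).
  destruct (Rle_or_lt (Cmod (Nt j)) (c + 1)) as [Hsmall|Hbig]; [exact Hsmall|]; nra.
Qed.

Variable K : nat.
Hypothesis ball_card : forall l : list C, NoDup l ->
  (forall x, In x l -> lattice beta x /\ Cmod x <= c + 1) -> (length l <= K)%nat.

Lemma expansion_length_upper : Cmod alpha ^ k * delta <= Cmod alpha ^ K * Cmod N.
Proof.
  assert (Hdelta : 0 < delta /\ delta <= 1).
  { split; [apply Rmin_glb_lt; [lra | apply Rabs_pos_lt, beta_nonreal] | apply Rmin_l]. }
  assert (HN : delta <= Cmod N).
  { apply lattice_Cmod_ge; [exact beta_nonreal | | exact expansion_neq0].
    destruct expansion as (_ & _ & EN & HL); rewrite EN; apply Lambda_in_lattice, HL; lia. }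
  assert (Hpow : forall n, 0 < Cmod alpha ^ n) by (intros; apply pow_lt; lra).
  destruct (le_lt_dec K k) as [HK|HK].
  - (* Otherwise N_(k-K), ..., N_k would be K+1 distinct lattice points in the disc of
       radius c + 1. *)
    assert (Hlarge : Cmod alpha ^ (k - K) < Cmod N).
    { destruct (Rlt_or_le (Cmod alpha ^ (k - K)) (Cmod N)) as [H|H]; [exact H | exfalso].
      assert (Hlen := ball_card (map Nt (seq (k - K) (S K)))).
      rewrite length_map, length_seq in Hlen; enough (S K <= K)%nat by lia; apply Hlen.
      - apply NoDup_map_NoDup_ForallPairs; [|apply seq_NoDup].
        intros i j Hi Hj; apply in_seq in Hi, Hj; apply expansion_injective; lia.
      - intros x Hx; apply in_map_iff in Hx; destruct Hx as (j & <- & Hj); apply in_seq in Hj.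
        destruct expansion as (_ & _ & _ & HL); split; [apply Lambda_in_lattice, HL; lia|].
        apply expansion_Cmod_small; [lia|].
        apply (Rle_trans _ _ _ H), Rle_pow; lra || lia. }
    replace k with (K + (k - K))%nat at 1 by lia; rewrite pow_add, Rmult_assoc.
    apply Rmult_le_compat_l; [left; apply Hpow|].
    pose proof (Hpow (k - K)%nat); nra.
  - assert (Cmod alpha ^ k <= Cmod alpha ^ K) by (apply Rle_pow; lra || lia).
    pose proof (Hpow k); nra.
Qed.

End Expansion.

Lemma expansion_log_bounds : exists C1 C2 : R, forall N k d,
  is_int_alpha_expansion alpha a0 N k d ->
  ln (Cmod N) <= C1 + INR k * ln (Cmod alpha) /\ INR k * ln (Cmod alpha) <= C2 + ln (Cmod N).
Proof.
  destruct (lattice_ball_card beta (c + 1) beta_nonreal) as [K HK].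
  pose proof c_pos.
  assert (Hdelta : 0 < delta) by (apply Rmin_glb_lt; [lra | apply Rabs_pos_lt, beta_nonreal]).
  exists (ln c + ln (Cmod alpha)), (INR K * ln (Cmod alpha) - ln delta).
  intros N k d Hexp.
  assert (HN : 0 < Cmod N) by (apply Cmod_gt_0, (expansion_neq0 N k d Hexp)).
  assert (Hpow : forall n, 0 < Cmod alpha ^ n) by (intros; apply pow_lt; lra).
  pose proof (expansion_Cmod_upper N k d Hexp) as Hup.
  pose proof (expansion_length_upper N k d Hexp K HK) as Hlow.
  apply ln_le in Hup; [|exact HN]; apply ln_le in Hlow; [|apply Rmult_lt_0_compat; auto].
  rewrite ln_mult, ln_pow, S_INR in Hup by (auto || lra).
  rewrite !ln_mult, !ln_pow in Hlow by (auto || lra).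
  split; lra.
Qed.

End QuadraticIrrational.

Theorem mainTheorem8 (alpha : C) (a0 a1 a2 : Z) :
  in_Qi alpha -> snd alpha <> 0 -> Cmod alpha > 1 ->
  Z.gcd (Z.gcd a0 a1) a2 = 1%Z -> (a2 > 0)%Z ->
  Cplus (Cplus (Cmult (RtoC (IZR a2)) (Cmult alpha alpha)) (Cmult (RtoC (IZR a1)) alpha))
        (RtoC (IZR a0)) = RtoC 0 ->
  exists Cst : R, forall (N : C) (k : nat) (d : nat -> nat),
    in_Lambda alpha N -> N <> RtoC 0 ->
    is_int_alpha_expansion alpha a0 N k d ->
    Rabs (INR k - ln (Cmod N) / ln (Cmod alpha)) <= Cst.
Proof.
  intros _ Hnonreal Hlarge Hprim Ha2 Hroot.
  destruct (expansion_log_bounds alpha a0 a1 a2 Hnonreal Hprim ltac:(lia) Hroot Hlarge)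
    as (C1 & C2 & Hbounds).
  assert (HL : 0 < ln (Cmod alpha)) by (rewrite <- ln_1; apply ln_increasing; lra).
  exists (Rmax C1 C2 / ln (Cmod alpha)); intros N k d _ _ Hexp.
  destruct (Hbounds N k d Hexp) as [Hup Hlow].
  replace (INR k - ln (Cmod N) / ln (Cmod alpha))
    with ((INR k * ln (Cmod alpha) - ln (Cmod N)) / ln (Cmod alpha)) by (field; lra).
  unfold Rdiv; rewrite Rabs_mult, Rabs_inv, (Rabs_pos_eq (ln (Cmod alpha))) by lra.
  apply Rmult_le_compat_r; [left; apply Rinv_0_lt_compat; exact HL|].
  pose proof (Rmax_l C1 C2); pose proof (Rmax_r C1 C2); apply Rabs_le; lra.
Qed.
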